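(* Let $G$ be a finite Abelian group of odd cardinality. Then $\mathrm{ms}_r(G)=\widetilde{\mathrm{ms}}_r(G)>\frac{1}{r^2}$ for every integer $r\ge 2$.
   Context: $G$ is written additively and carries its normalized counting (Haar) measure $\mu(A)=|A|/|G|$. For $A\subset G$ let $\mathrm{ms}(A)=\max_{c\in G}\mu(A\cap(2c-A))$ (symmetry with respect to central symmetries $x\mapsto 2c-x$) and $\widetilde{\mathrm{ms}}(A)=\max_{c\in G}\mu(A\cap(c-A))$ (symmetry with respect to quasi-central symmetries $x\mapsto c-x$). For an integer $r\ge1$, $\mathrm{ms}_r(G)=\min_\chi\max_{i<r}\mathrm{ms}(\chi^{-1}(i))$ and $\widetilde{\mathrm{ms}}_r(G)=\min_\chi\max_{i<r}\widetilde{\mathrm{ms}}(\chi^{-1}(i))$, the minima over all colorings $\chi:G\to\{0,\dots,r-1\}$. *)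

From mathcomp Require Import all_boot all_order all_algebra.
Set Implicit Arguments. Unset Strict Implicit. Unset Printing Implicit Defensive.
Import Order.TTheory GRing.Theory Num.Theory.
Local Open Scope ring_scope.

Definition mu (G : finZmodType) (A : {set G}) : rat := (#|A|%:R / #|G|%:R)%R.

Definition csym (G : finZmodType) (c : G) (A : {set G}) : {set G} :=
  [set c *+ 2 - x | x in A].
Definition qsym (G : finZmodType) (c : G) (A : {set G}) : {set G} :=
  [set c - x | x in A].

(* ms(A) = max_c mu(A ∩ (2c - A)) ; values are >= 0 so 0 is a neutral start *)
Definition ms (G : finZmodType) (A : {set G}) : rat :=
  \big[Num.max/0]_(c : G) mu (A :&: csym c A).
Definition msq (G : finZmodType) (A : {set G}) : rat :=
  \big[Num.max/0]_(c : G) mu (A :&: qsym c A).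

Definition cls (G : finZmodType) (r : nat) (chi : {ffun G -> 'I_r}) (i : 'I_r)
  : {set G} := [set x | chi x == i].

(* ms_r(G) = min_chi max_{i<r} ms(chi^{-1}(i)); all values lie in [0,1],
   so 1 is a neutral start for the min (and colorings exist for r >= 1). *)
Definition ms_r (G : finZmodType) (r : nat) : rat :=
  \big[Num.min/1]_(chi : {ffun G -> 'I_r})
     \big[Num.max/0]_(i : 'I_r) ms (cls chi i).
Definition msq_r (G : finZmodType) (r : nat) : rat :=
  \big[Num.min/1]_(chi : {ffun G -> 'I_r})
     \big[Num.max/0]_(i : 'I_r) msq (cls chi i).

(* When #|G| is odd, c |-> 2c is a bijection of G, so central and quasi-central
   symmetries yield the same invariants.  For the bound, some colour class A has
   #|A| >= #|G|/r; summing #|A :&: (c - A)| over c counts all pairs of A, so the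
   average is #|A|^2/#|G| >= #|G|/r^2.  Equality would force all these numbers to
   coincide; but x |-> c - x is an involution of A :&: (c - A) with a fixed point
   (then exactly one) iff c lies in 2A, so the numbers are odd for c in 2A and
   even for c outside 2A, which exists because #|2A| = #|A| < #|G|. *)

From mathcomp Require Import all_boot all_order all_algebra fingroup cyclic.
From mathcomp Require Import zify.
Set Implicit Arguments. Unset Strict Implicit. Unset Printing Implicit Defensive.
Import Order.TTheory GRing.Theory Num.Theory.

Lemma odd_card_involution (T : finType) (s : T -> T) (S : {set T}) :
  involutive s -> {in S, forall x, s x \in S} ->
  odd #|S| = odd #|[set x in S | s x == x]|.
Proof.
move=> sK sS; set N := [set x in S | s x != x].
have -> : #|S| = #|[set x in S | s x == x]| + #|N|.
  rewrite -!sum1_card (bigID (fun x => s x == x)) /=.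
  by congr (_ + _); apply: eq_bigl => x; rewrite inE.
suff -> : #|N| = (#|[set x in N | enum_rank x < enum_rank (s x)]|).*2.
  by rewrite oddD odd_double addbF.
(* pair each non-fixed x with s x, listing the pair under its smaller rank *)
set L := [set x in N | _].
have inL x : (x \in L) = (x \in N) && (enum_rank x < enum_rank (s x)).
  by rewrite inE.
have sN x : (s x \in N) = (x \in N).
  have sS' : (s x \in S) = (x \in S) by apply/idP/idP => [/sS|/sS]; rewrite ?sK.
  by rewrite !inE sS' sK eq_sym.
have NE : N = L :|: s @: L.
  apply/setP=> x; rewrite in_setU (can_imset_pre _ sK) [x \in s @^-1: L]inE !inL sN sK.
  case xN: (x \in N) => //=; move: xN; rewrite inE => /andP[_ nx].
  by case: ltngtP => // /ord_inj /enum_rank_inj xsx; rewrite -xsx eqxx in nx.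
have LsL : L :&: s @: L = set0.
  apply/setP=> x; rewrite in_setI (can_imset_pre _ sK) [x \in s @^-1: L]inE !inL sK in_set0.
  by case: ltngtP; rewrite ?andbF.
by rewrite NE cardsU LsL cards0 subn0 card_imset ?addnn //; apply: can_inj sK.
Qed.

Local Open Scope ring_scope.

Section OddOrder.

Variable G : finZmodType.

Lemma mulrn_card (x : G) : x *+ #|G| = 0.
Proof. by rewrite -FinRing.zmodXgE -cardsT expg_cardG ?inE. Qed.

Lemma mem_qsym (c x : G) (A : {set G}) : (x \in qsym c A) = (c - x \in A).
Proof. by rewrite /qsym (can_imset_pre _ (subKr c)) inE. Qed.

Lemma sum_card_setI_qsym (A : {set G}) :
  (\sum_(c : G) #|A :&: qsym c A| = #|A| ^ 2)%N.
Proof.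
have cardIE c : #|A :&: qsym c A| = (\sum_(x in A) ((c - x)%R \in A))%N.
  rewrite -sum1_card (eq_bigl (fun x => (x \in A) && (x \in qsym c A))).
    by rewrite big_mkcondr; apply: eq_bigr => x _; rewrite mem_qsym; case: (_ \in A).
  by move=> x; rewrite inE.
under eq_bigr do rewrite cardIE.
rewrite exchange_big expnS expn1 -sum_nat_const; apply: eq_big => // x _.
rewrite (reindex_inj (addIr x)); under eq_bigr do rewrite addrK.
by rewrite -sum1_card [RHS]big_mkcond.
Qed.

Hypothesis oddG : odd #|G|.

Lemma mulr2nK_odd : cancel (fun x : G => x *+ 2) (fun y => y *+ (#|G|.+1)./2).
Proof.
move=> x /=; rewrite -mulrnA.
have -> : (2 * (#|G|.+1)./2 = #|G| + 1)%N.
  by rewrite mul2n addn1 -[in RHS](odd_double_half #|G|.+1) /= oddG.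
by rewrite mulrnDr mulrn_card add0r.
Qed.

Lemma mulr2n_inj_odd : injective (fun x : G => x *+ 2).
Proof. exact: can_inj mulr2nK_odd. Qed.

Lemma ms_eq_msq (A : {set G}) : ms A = msq A.
Proof. by rewrite /msq [RHS](reindex_inj mulr2n_inj_odd). Qed.

Lemma odd_card_setI_qsym (c : G) (A : {set G}) :
  odd #|A :&: qsym c A| = (c \in [set x *+ 2 | x in A]).
Proof.
have fixE d x : (d - x == x) = (x *+ 2 == d) by rewrite subr_eq mulr2n eq_sym.
rewrite (@odd_card_involution _ (fun x => c - x)) => [||x]; last 2 first.
- exact: subKr.
- by rewrite !inE !mem_qsym subKr andbC.
case: (boolP (c \in _)) => [/imsetP[a aA ->] | c2A].
  suff -> : [set x in A :&: qsym (a *+ 2) A | a *+ 2 - x == x] = [set a].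
    by rewrite cards1.
  apply/setP=> x; rewrite !inE mem_qsym fixE (inj_eq mulr2n_inj_odd).
  by case: (eqVneq x a) => [->|]; rewrite ?andbF // mulr2n addrK aA.
suff -> : [set x in A :&: qsym c A | c - x == x] = set0 by rewrite cards0.
apply/setP=> x; rewrite !inE fixE; apply: contraNF c2A => /andP[/andP[xA _] /eqP <-].
exact: imset_f.
Qed.

Lemma exists_card_setI_qsym_gt (A : {set G}) : (0 < #|A| < #|G|)%N ->
  exists c, (#|A| ^ 2 < #|A :&: qsym c A| * #|G|)%N.
Proof.
case/andP=> A0 AG; apply/existsP; apply: contraT => /existsPn notgt.
have G0 : (0 < #|G|)%N := ltn_trans A0 AG.
(* the numbers [#|A :&: qsym c A| * #|G|] are bounded by, and average to, [#|A| ^ 2] *)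
have eq_sq c : (#|A :&: qsym c A| * #|G| = #|A| ^ 2)%N.
  have le_sq c' : (#|A :&: qsym c' A| * #|G| <= #|A| ^ 2)%N by rewrite leqNgt notgt.
  have [_ sum_eqE] := @leqif_sum G predT _ _ _ (fun c' _ => leqif_eq (le_sq c')).
  have /forallP/(_ c)/eqP// : [forall c', #|A :&: qsym c' A| * #|G| == #|A| ^ 2]%N.
  by rewrite -sum_eqE -big_distrl /= sum_card_setI_qsym sum_nat_const mulnC.
case/card_gt0P: A0 => a aA.
have /subsetPn[c _ c2A] : ~~ ([set: G] \subset [set x *+ 2 | x in A]).
  have card2A : #|[set x *+ 2 | x in A]| = #|A| := card_imset _ mulr2n_inj_odd.
  by apply: contraL AG => /subset_leq_card; rewrite cardsT card2A -leqNgt.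
have := odd_card_setI_qsym (a *+ 2) A; rewrite (imset_f (fun x => x *+ 2) aA).
have -> : #|A :&: qsym (a *+ 2) A| = #|A :&: qsym c A|.
  by apply/eqP; rewrite -(eqn_pmul2r G0) !eq_sq.
by rewrite odd_card_setI_qsym (negbTE c2A).
Qed.

End OddOrder.

Lemma exists_large_cls (G : finZmodType) (r : nat) (chi : {ffun G -> 'I_r}) :
  (0 < r)%N -> exists i, (#|G| <= #|cls chi i| * r)%N.
Proof.
move=> r0; have ord_gt0 : (0 < #|'I_r|)%N by rewrite card_ord.
have [i imax] := bigop.eq_bigmax (fun i => #|cls chi i|) ord_gt0.
exists i; rewrite -imax.
have -> : #|G| = (\sum_(j < r) #|cls chi j|)%N.
  rewrite -sum1_card (partition_big chi xpredT) //; apply: eq_bigr => j _.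
  by rewrite sum1dep_card; apply: eq_card => x; rewrite !inE.
rewrite mulnC -[X in (_ <= X * _)%N](card_ord r) -sum_nat_const.
by apply: leq_sum => j _; apply: leq_bigmax.
Qed.

Lemma inv_sqr_lt_msq (G : finZmodType) (r : nat) (A : {set G}) :
  odd #|G| -> (2 <= r)%N -> (#|G| <= #|A| * r)%N -> 1 / r%:R ^+ 2 < msq A.
Proof.
move=> oG r2 Alarge; have r0 : (0 < r)%N := ltnW r2.
have G0 : (0 < #|G|)%N by apply/card_gt0P; exists 0.
suff [c Ac] : exists c, (#|G| < #|A :&: qsym c A| * r ^ 2)%N.
  apply: lt_le_trans (le_bigmax _ _ c); rewrite /mu ltr_pdivrMr ?exprn_gt0 ?ltr0n //.
  by rewrite mulrAC ltr_pdivlMr ?ltr0n // mul1r -natrX -natrM ltr_nat.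
have [->|AT] := eqVneq A setT.
  exists 0; rewrite setTI /qsym card_imset ?cardsT; last exact: can_inj (subKr 0).
  by rewrite ltn_Pmulr //; move: r2; clear; nia.
have A0 : (0 < #|A|)%N by move: G0 Alarge; clear; nia.
have AG : (#|A| < #|G|)%N by rewrite -cardsT proper_card // properT.
have [c Ac] := exists_card_setI_qsym_gt oG (introT andP (conj A0 AG)).
by exists c; move: G0 Alarge Ac; clear; nia.
Qed.

Theorem theorem7p6 (G : finZmodType) (r : nat) :
  odd #|G| -> (2 <= r)%N ->
  ms_r G r = msq_r G r /\ 1 / (r%:R ^+ 2) < ms_r G r.
Proof.
move=> oG r2.
have ms_msq_r : ms_r G r = msq_r G r.
  by apply: eq_bigr => chi _; apply: eq_bigr => i _; apply: ms_eq_msq.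
split=> //; rewrite ms_msq_r; apply: lt_bigmin => [|chi _].
  rewrite ltr_pdivrMr ?exprn_gt0 ?ltr0n ?(ltnW r2) // mul1r -natrX ltr1n.
  by move: r2; clear; nia.
have [i Ai] := exists_large_cls chi (ltnW r2).
exact: lt_le_trans (inv_sqr_lt_msq oG r2 Ai) (le_bigmax _ _ i).
Qed.
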